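(* If $\mathcal{O}_0$ and $\mathcal{O}_1$ are decomposable sets of upwards closed modalities for the same signature $\Sigma$, then $\mathcal{O}_0\cup\mathcal{O}_1$ is decomposable.
   Context: $\Sigma$ is a signature of effect operations with arities $\alpha^n\to\alpha$, $\mathbf{N}\times\alpha^n\to\alpha$, $\alpha^{\mathbf{N}}\to\alpha$ or $\mathbf{N}\times\alpha^{\mathbf{N}}\to\alpha$. $TX$ is the set of possibly infinite labelled trees with leaves $\bot$ or elements of $X$ and internal nodes labelled by operations (or $\sigma_m$, $m\in\mathbb{N}$) with children according to arity; $t\le t'$ iff $t$ is obtained from $t'$ by replacing subtrees with $\bot$. $\mu:TTX\to TX$ replaces each leaf of a tree of trees by that tree. $\mathbf{1}=\{*\}$. A modality $o$ has an interpretation $[\![o]\!]\subseteq T\mathbf{1}$; upwards closed means $[\![o]\!]$ is upward closed under $\le$. $t[\in P]\in T\mathbf{1}$ replaces leaves in $P$ by $*$ and other $X$-leaves by $\bot$; $o(A)=\{t\in TX\mid t[\in A]\in[\![o]\!]\}$. For a set $\mathcal{O}$ of modalities: $\mathcal{T}_{\mathcal{O}}$ is the least class of formulas containing $o(\top),o(\bot)$ ($o\in\mathcal{O}$) closed under arbitrary $\bigvee,\bigwedge$, with $[\![o(\top)]\!]=o(\{*\})$, $[\![o(\bot)]\!]=o(\emptyset)$, unions/intersections; $t\trianglelefteq_{\mathcal{O}} t'$ iff $\forall\Phi\in\mathcal{T}_{\mathcal{O}}$, $t\in[\![\Phi]\!]\Rightarrow t'\in[\![\Phi]\!]$; for $r,r'\in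 TT\mathbf{1}$, $r\preccurlyeq_{\mathcal{O}} r'$ iff $\forall o\in\mathcal{O}\,\forall\Phi\in\mathcal{T}_{\mathcal{O}}$, $r\in o([\![\Phi]\!])\Rightarrow r'\in o([\![\Phi]\!])$. $\mathcal{O}$ is decomposable if $r\preccurlyeq_{\mathcal{O}} r'$ implies $\mu r\trianglelefteq_{\mathcal{O}}\mu r'$ for all $r,r'\in TT\mathbf{1}$. *)

From Stdlib Require Import ClassicalEpsilon.

Set Implicit Arguments.

(* Arities: alpha^n -> alpha, N x alpha^n -> alpha, alpha^N -> alpha,
   N x alpha^N -> alpha. *)
Inductive arity : Type :=
| ArFin (n : nat) | ArNFin (n : nat) | ArInf | ArNInf.

Record signature : Type := Signature {
  op : Type;
  ar : op -> arity }.

(* the natural-number parameter carried by a node (sigma_m) *)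
Definition param (a : arity) : Type :=
  match a with ArNFin _ | ArNInf => nat | _ => unit end.

Definition child (a : arity) : Type :=
  match a with ArFin n | ArNFin n => {i : nat | i < n} | _ => nat end.

CoInductive tree (S : signature) (X : Type) : Type :=
| Bot : tree S X
| Leaf : X -> tree S X
| Node (s : op S) (p : param (@ar S s)) (k : child (@ar S s) -> tree S X) : tree S X.

Arguments Bot {S X}.
Arguments Leaf {S X} _.
Arguments Node {S X} s p k.

Definition unit_tree (S : signature) := tree S unit.

CoInductive tle (S : signature) (X : Type) : tree S X -> tree S X -> Prop :=
| tle_bot (t : tree S X) : tle Bot t
| tle_leaf (x : X) : tle (Leaf x) (Leaf x)
| tle_node (s : op S) (p : param (@ar S s)) (k k' : child (@ar S s) -> tree S X) :
    (forall i, tle (k i) (k' i)) -> tle (Node s p k) (Node s p k').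

CoFixpoint mu (S : signature) (X : Type) (r : tree S (tree S X)) : tree S X :=
  match r with
  | Bot => Bot
  | Leaf t => t
  | Node s p k => Node s p (fun i => mu (k i))
  end.

CoFixpoint mark (S : signature) (X : Type) (P : X -> Prop) (t : tree S X)
  : tree S unit :=
  match t with
  | Bot => Bot
  | Leaf x => if excluded_middle_informative (P x) then Leaf tt else Bot
  | Node s p k => Node s p (fun i => mark P (k i))
  end.

Definition upwards_closed (S : signature) (A : tree S unit -> Prop) : Prop :=
  forall t t', tle t t' -> A t -> A t'.

(* o(A) = { t in T X | t[in A] in [[o]] }, where io = [[o]] *)
Definition modal (S : signature) (X : Type) (io : tree S unit -> Prop)
  (A : X -> Prop) (t : tree S X) : Prop := io (mark A t).

Inductive formula (Mod : Type) : Type :=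
| FTop (o : Mod)
| FBot (o : Mod)
| FOr (I : Type) (f : I -> formula Mod)
| FAnd (I : Type) (f : I -> formula Mod).

Fixpoint in_TO (Mod : Type) (O : Mod -> Prop) (Phi : formula Mod) : Prop :=
  match Phi with
  | FTop o | FBot o => O o
  | FOr f | FAnd f => forall i, in_TO O (f i)
  end.

Fixpoint sem (S : signature) (Mod : Type) (interp : Mod -> tree S unit -> Prop)
  (Phi : formula Mod) : tree S unit -> Prop :=
  match Phi with
  | FTop o => modal (interp o) (fun _ : unit => True)
  | FBot o => modal (interp o) (fun _ : unit => False)
  | FOr f => fun t => exists i, sem interp (f i) t
  | FAnd f => fun t => forall i, sem interp (f i) t
  end.

Definition tri_le (S : signature) (Mod : Type) (interp : Mod -> tree S unit -> Prop)
  (O : Mod -> Prop) (t t' : tree S unit) : Prop :=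
  forall Phi, in_TO O Phi -> sem interp Phi t -> sem interp Phi t'.

Definition prec_le (S : signature) (Mod : Type) (interp : Mod -> tree S unit -> Prop)
  (O : Mod -> Prop) (r r' : tree S (tree S unit)) : Prop :=
  forall o, O o -> forall Phi, in_TO O Phi ->
    modal (interp o) (sem interp Phi) r -> modal (interp o) (sem interp Phi) r'.

Definition decomposable (S : signature) (Mod : Type)
  (interp : Mod -> tree S unit -> Prop) (O : Mod -> Prop) : Prop :=
  forall r r', prec_le interp O r r' -> tri_le interp O (mu r) (mu r').

(* Formulas of T_O are built from the atoms o(top), o(bot) by unions and
   intersections, so t <|_O t' only needs to be checked on atoms.  Hence
   <|_(O0 u O1) is the intersection of <|_O0 and <|_O1, while <~_(O0 u O1)
   is contained in both <~_O0 and <~_O1; decomposability of O0 and O1 then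
   gives that of their union. *)

Section Preorders.

Context {S : signature} {Mod : Type} {interp : Mod -> tree S unit -> Prop}.

Lemma in_TO_mono {O O' : Mod -> Prop} {Phi : formula Mod} :
  (forall o, O o -> O' o) -> in_TO O Phi -> in_TO O' Phi.
Proof.
  intros HOO'; induction Phi; simpl; auto.
Qed.

Lemma prec_le_sub {O O' : Mod -> Prop} {r r' : tree S (tree S unit)} :
  (forall o, O o -> O' o) -> prec_le interp O' r r' -> prec_le interp O r r'.
Proof.
  intros HOO' Hrr' o Ho Phi HPhi.
  apply Hrr'; [ now apply HOO' | now apply (in_TO_mono HOO') ].
Qed.

Lemma tri_le_of_atoms (O : Mod -> Prop) (t t' : tree S unit) :
  (forall o, O o -> sem interp (FTop o) t -> sem interp (FTop o) t') ->
  (forall o, O o -> sem interp (FBot o) t -> sem interp (FBot o) t') ->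
  tri_le interp O t t'.
Proof.
  intros Htop Hbot Phi; induction Phi as [o|o|I f IH|I f IH]; simpl.
  - exact (Htop o).
  - exact (Hbot o).
  - intros HO [i Hi]. exists i. now apply IH.
  - intros HO Hf i. now apply IH.
Qed.

Lemma tri_le_union (O0 O1 : Mod -> Prop) (t t' : tree S unit) :
  tri_le interp O0 t t' -> tri_le interp O1 t t' ->
  tri_le interp (fun o => O0 o \/ O1 o) t t'.
Proof.
  intros H0 H1; apply tri_le_of_atoms; intros o [Ho|Ho].
  - exact (H0 (FTop o) Ho).
  - exact (H1 (FTop o) Ho).
  - exact (H0 (FBot o) Ho).
  - exact (H1 (FBot o) Ho).
Qed.

End Preorders.

Theorem lemma4p20 (S : signature) (Mod : Type)
  (interp : Mod -> tree S unit -> Prop) (O0 O1 : Mod -> Prop) :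
  (forall o, O0 o -> upwards_closed (interp o)) ->
  (forall o, O1 o -> upwards_closed (interp o)) ->
  decomposable interp O0 -> decomposable interp O1 ->
  decomposable interp (fun o => O0 o \/ O1 o).
Proof.
  intros _ _ D0 D1 r r' Hrr'.
  apply tri_le_union.
  - apply D0, (prec_le_sub (fun o Ho => or_introl Ho) Hrr').
  - apply D1, (prec_le_sub (fun o Ho => or_intror Ho) Hrr').
Qed.
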